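(* A (possibly infinite) graph $G$ is $\omega$-evadible if and only if at least one of the following holds: (1) for every $k\in\mathbb{N}$, $G$ contains a path on $k$ vertices as a subgraph; (2) for every $k\in\mathbb{N}$, there is a vertex $v_k\in V(G)$ lying on $k$ pairwise edge-disjoint cycles of $G$.
   Context: Cat Herding is played on a simple, possibly infinite graph $G$. The cat first places its token on a vertex. Then the players alternate, the herder moving first: the herder deletes one edge of the current graph, and then, unless the cat's current vertex has degree $0$ in the current graph, the cat moves its token along a finite path with at least one edge in the current graph to a different vertex. The cat is captured when its vertex has degree $0$ in the current graph. $G$ is $k$-evadible if the cat has a strategy (including its choice of starting vertex) that, against every herder strategy, yields a legal cat move after each of the first $k-1$ edge deletions; $G$ is $\omega$-evadible if it is $k$-evadible for every $k\in\mathbb{N}$. *)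

From Stdlib Require Import List Arith.
Import ListNotations.

Section CatHerding.
Variable V : Type.

Definition simple_graph (adj : V -> V -> Prop) : Prop :=
  (forall x y, adj x y -> adj y x) /\ (forall x, ~ adj x x).

Fixpoint chain (R : V -> V -> Prop) (p : list V) : Prop :=
  match p with
  | [] => True
  | x :: q =>
      match q with
      | [] => True
      | y :: _ => R x y /\ chain R q
      end
  end.

Definition del_edge (E : V -> V -> Prop) (u v : V) : V -> V -> Prop :=
  fun x y => E x y /\ ~ (x = u /\ y = v) /\ ~ (x = v /\ y = u).

(* a legal cat move in the current graph E: c moves along a finite path with
   at least one edge (distinct vertices c :: q) ending at c' (<> c) *)
Definition cat_move (E : V -> V -> Prop) (c c' : V) : Prop :=
  exists q : list V, q <> [] /\ NoDup (c :: q) /\ chain E (c :: q) /\ c' = last q c.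

(* survives n: n more rounds: the cat, sitting at c in the current graph E,
   is not captured, and for each edge the herder deletes, the cat has a legal
   move to a position from which it survives n more rounds *)
Fixpoint survives (n : nat) (E : V -> V -> Prop) (c : V) : Prop :=
  match n with
  | 0 => True
  | S m => (exists y, E c y) /\
           forall u v, E u v ->
             exists c', cat_move (del_edge E u v) c c' /\
                        survives m (del_edge E u v) c'
  end.

Definition k_evadible (adj : V -> V -> Prop) (k : nat) : Prop :=
  exists c : V, survives (k - 1) adj c.

Definition omega_evadible (adj : V -> V -> Prop) : Prop :=
  forall k : nat, k_evadible adj k.

Definition has_path_on (adj : V -> V -> Prop) (k : nat) : Prop :=
  exists p : list V, length p = k /\ NoDup p /\ chain adj p.

Definition is_cycle (adj : V -> V -> Prop) (p : list V) : Prop :=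
  exists x q, p = x :: q /\ 3 <= length p /\ NoDup p /\ chain adj p /\
              adj (last q x) x.

Definition cyc_edge (p : list V) (u v : V) : Prop :=
  (exists l1 l2, p = l1 ++ u :: v :: l2) \/
  (exists x q, p = x :: q /\ u = last q x /\ v = x).

Definition cycle_has_edge (p : list V) (u v : V) : Prop :=
  cyc_edge p u v \/ cyc_edge p v u.

Definition edge_disjoint (p1 p2 : list V) : Prop :=
  forall u v, cycle_has_edge p1 u v -> ~ cycle_has_edge p2 u v.

Definition on_k_edge_disjoint_cycles (adj : V -> V -> Prop) (v : V) (k : nat) : Prop :=
  exists C : nat -> list V,
    (forall i, i < k -> is_cycle adj (C i) /\ In v (C i)) /\
    (forall i j, i < j -> j < k -> edge_disjoint (C i) (C j)).

End CatHerding.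

(* If [G] has arbitrarily long paths, the cat starts in the middle of a path whose two
   arms have [2^k] vertices; a deleted edge misses one arm, and the cat walks halfway
   along it, so the shorter arm is at worst halved.  If some vertex [v] lies on many
   edge-disjoint cycles, the cat shuttles between [v] and a neighbour on an intact cycle;
   each deletion spoils at most one cycle.

   Conversely, let every path have fewer than [P] vertices and no vertex lie on [Q]
   edge-disjoint cycles.  Call a neighbour [u] of [d] cyclic if [du] lies on a cycle
   through [d].  Their number is bounded: many cyclic neighbours in one component of
   [G - d] yield [Q] edge-disjoint cycles through [d], and [Q] of them in distinct
   components yield one cycle each.  The herder picks a hub [d] that the cat can reach
   (initially its start) and deletes the cyclic edges at [d] one by one; then the cat's
   way to [d] goes through a unique neighbour [x], and deleting [dx] traps the cat on
   [x]'s side, where paths from the new hub [x] are shorter.  This ends within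
   [P (Q * hub_threshold P Q + 2)] rounds. *)

From Stdlib Require Import List Arith Lia Permutation Classical Relations.
Import ListNotations.

Section CatHerdingProof.
Variable V : Type.
Implicit Types (R E F G H : V -> V -> Prop) (l q : list V).

Notation reach R := (clos_refl_trans_1n V R).

Definition consecutive l (a b : V) := exists l1 l2, l = l1 ++ a :: b :: l2.

Lemma last_default_irrel q (x y : V) : q <> [] -> last q x = last q y.
Proof.
  induction q as [|a [|b q] IH]; intros Hq; [congruence|reflexivity|].
  apply IH; discriminate.
Qed.

Lemma last_cons_default (x d : V) q : last (x :: q) d = last q x.
Proof.
  destruct q as [|y q]; [reflexivity|].
  apply (last_default_irrel (y :: q)); discriminate.
Qed.

Lemma last_app_cons l (x d : V) l2 : last (l ++ x :: l2) d = last l2 x.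
Proof.
  induction l as [|a l IH]; simpl; [apply last_cons_default|].
  rewrite <- IH. destruct l; reflexivity.
Qed.

Lemma in_last q (x : V) : In (last q x) (x :: q).
Proof.
  revert x; induction q as [|y q IH]; intros x; [now left|].
  rewrite last_cons_default. right. apply IH.
Qed.

Lemma in_last_nonempty q (x : V) : q <> [] -> In (last q x) q.
Proof.
  destruct q as [|y q]; intros Hq; [congruence|].
  rewrite last_cons_default. apply in_last.
Qed.

Lemma chain_cons_inv R x l : chain V R (x :: l) -> chain V R l.
Proof. destruct l; simpl; tauto. Qed.

Lemma chain_app_cons R l1 x l2 :
  chain V R (l1 ++ x :: l2) <-> chain V R (l1 ++ [x]) /\ chain V R (x :: l2).
Proof.
  induction l1 as [|a [|b l1] IH]; simpl in *.
  - destruct l2; simpl; tauto.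
  - destruct l2; simpl; tauto.
  - rewrite IH. tauto.
Qed.

Lemma chain_app_l R l m : chain V R (l ++ m) -> chain V R l.
Proof.
  induction l as [|a [|b l] IH]; simpl in *; auto.
  destruct m; simpl; tauto.
Qed.

Lemma chain_app_r R l m : chain V R (l ++ m) -> chain V R m.
Proof.
  induction l as [|a l IH]; simpl; auto.
  intros Hc. apply IH, (chain_cons_inv R a), Hc.
Qed.

Lemma chain_incl R F l : inclusion V R F -> chain V R l -> chain V F l.
Proof.
  intros HRF. induction l as [|a l IH]; simpl; auto.
  destruct l; auto. intros [H1 H2]; split; auto.
Qed.

Lemma chain_consecutive R l a b : chain V R l -> consecutive l a b -> R a b.
Proof.
  intros Hc [l1 [l2 ->]]. apply chain_app_r in Hc. apply Hc.
Qed.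

Lemma consecutive_chain R l : (forall a b, consecutive l a b -> R a b) -> chain V R l.
Proof.
  induction l as [|a l IH]; simpl; auto.
  destruct l as [|b l]; auto. intros H. split.
  - apply H. now exists [], l.
  - apply IH. intros x y [l1 [l2 E]]. apply H. exists (a :: l1), l2. now rewrite E.
Qed.

Lemma consecutive_In l (a b : V) : consecutive l a b -> In a l /\ In b l.
Proof. intros [l1 [l2 ->]]. split; apply in_or_app; simpl; auto. Qed.

Lemma consecutive_rev l (a b : V) : consecutive l a b -> consecutive (rev l) b a.
Proof.
  intros [l1 [l2 ->]]. exists (rev l2), (rev l1).
  rewrite rev_app_distr. simpl. now rewrite <- !app_assoc.
Qed.

Lemma consecutive_NoDup_neq l (x y : V) : NoDup l -> consecutive l x y -> x <> y.
Proof.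
  intros Hn [l1 [l2 ->]] <-. apply NoDup_remove_2 in Hn.
  apply Hn, in_or_app. simpl; auto.
Qed.

Lemma not_consecutive_to_head (x y : V) l : NoDup (x :: l) -> ~ consecutive (x :: l) y x.
Proof.
  intros Hn [[|a l1] [l2 E]]; simpl in E; injection E; intros; subst;
    inversion Hn as [|? ? Hx _]; apply Hx.
  - now left.
  - apply in_or_app. simpl; auto.
Qed.

Lemma chain_rev R l : symmetric V R -> chain V R l -> chain V R (rev l).
Proof.
  intros Hs Hc. apply consecutive_chain. intros a b Hab.
  apply consecutive_rev in Hab. rewrite rev_involutive in Hab.
  apply Hs, (chain_consecutive R l); auto.
Qed.

Lemma chain_snoc R (y x : V) l :
  chain V R (y :: l) -> R (last l y) x -> chain V R (y :: l ++ [x]).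
Proof.
  revert y; induction l as [|a l IH]; intros y H1 H2; [simpl in *; tauto|].
  rewrite last_cons_default in H2. destruct H1 as [H1 H3].
  split; [exact H1|]. apply IH; assumption.
Qed.

Lemma chain_snoc_inv R (y x : V) l : chain V R (y :: l ++ [x]) -> R (last l y) x.
Proof.
  intros H. rewrite <- (last_cons_default y y l). apply (chain_consecutive R _ _ _ H).
  change (y :: l ++ [x]) with ((y :: l) ++ [x]).
  rewrite (app_removelast_last y (l := y :: l)) at 1 by discriminate.
  exists (removelast (y :: l)), []. now rewrite <- app_assoc.
Qed.

Lemma chain_incoming_edge R x l y : chain V R (x :: l) -> In y l -> exists z, R z y.
Proof.
  intros Hc Hy. apply in_split in Hy. destruct Hy as [l1 [l2 ->]].
  apply (chain_app_cons R (x :: l1)) in Hc. destruct Hc as [Hc _].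
  exists (last l1 x). apply chain_snoc_inv; auto.
Qed.

Lemma reach_edge R x y : R x y -> reach R x y.
Proof. apply clos_rt1n_step. Qed.

Lemma reach_trans R x y z : reach R x y -> reach R y z -> reach R x z.
Proof.
  intros Hxy Hyz. apply clos_rt_rt1n.
  apply rt_trans with y; apply clos_rt1n_rt; assumption.
Qed.

Lemma reach_sym R x y : symmetric V R -> reach R x y -> reach R y x.
Proof.
  intros Hs. induction 1 as [|x y z Hxy _ IH]; [constructor|].
  apply reach_trans with y; [exact IH|]. apply reach_edge, Hs, Hxy.
Qed.

Lemma reach_incl R F x y : inclusion V R F -> reach R x y -> reach F x y.
Proof. intros HRF. induction 1; econstructor; eauto. Qed.

Lemma reach_of_edges_reach R F x y :
  (forall a b, R a b -> reach F a b) -> reach R x y -> reach F x y.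
Proof.
  intros HRF. induction 1 as [|x y z Hxy _ IH]; [constructor|].
  apply reach_trans with y; auto.
Qed.

Lemma chain_reach_last R x q : chain V R (x :: q) -> reach R x (last q x).
Proof.
  revert x; induction q as [|y q IH]; intros x H; [constructor|].
  destruct H as [Hxy Hq]. rewrite last_cons_default. econstructor; eauto.
Qed.

Lemma chain_reach_In R x q y : chain V R (x :: q) -> In y (x :: q) -> reach R x y.
Proof.
  revert x; induction q as [|a q IH]; intros x H [<-|Hy]; try constructor.
  - destruct Hy.
  - destruct H as [Hxa Hq]. econstructor; eauto.
Qed.

Lemma reach_path R x y :
  reach R x y -> exists q, NoDup (x :: q) /\ chain V R (x :: q) /\ last q x = y.
Proof.
  induction 1 as [x|x y z Hxy Hyz [q [Hn [Hc Hl]]]].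
  - exists []. repeat constructor; auto.
  - destruct (classic (In x (y :: q))) as [Hi|Hi].
    + apply in_split in Hi. destruct Hi as [l1 [l2 E]]. exists l2. rewrite E in Hn, Hc.
      split; [|split].
      * exact (NoDup_app_remove_l _ _ Hn).
      * exact (chain_app_r _ _ _ Hc).
      * rewrite <- Hl, <- (last_cons_default y x q), E. symmetry. apply last_app_cons.
    + exists (y :: q). split; [|split].
      * constructor; auto.
      * split; auto.
      * rewrite last_cons_default. exact Hl.
Qed.

Definition del_vertex E (d : V) := fun a b => E a b /\ a <> d /\ b <> d.

Lemma del_vertex_sym E d : symmetric V E -> symmetric V (del_vertex E d).
Proof. intros Hs x y [H1 [H2 H3]]. split; auto. Qed.

Lemma del_vertex_incl E F d : inclusion V E F -> inclusion V (del_vertex E d) (del_vertex F d).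
Proof. intros HEF a b [H1 H2]. split; auto. Qed.

Lemma reach_del_vertex_from E d u : reach (del_vertex E d) d u -> u = d.
Proof. intros Hr. inversion Hr as [|? ? Hd _]; [reflexivity|]. now destruct Hd as [_ [? _]]. Qed.

Lemma reach_last_neighbour E d c :
  reach E c d -> c <> d -> exists x, E x d /\ reach (del_vertex E d) c x.
Proof.
  induction 1 as [x|x y z Hxy Hyz IH]; intros Hne; [congruence|].
  destruct (classic (y = z)) as [<-|Hn].
  - exists x. split; [exact Hxy|constructor].
  - destruct (IH Hn) as [w [Hw Hr]]. exists w. split; [exact Hw|].
    econstructor; [|exact Hr]. repeat split; auto.
Qed.

Lemma reach_until_blocked H (B : V -> V -> Prop) (S : list V) v z :
  (forall a b, B a b -> In a S) -> reach H v z ->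
  reach (fun a b => H a b /\ ~ B a b) v z \/
  exists s, In s S /\ reach (fun a b => H a b /\ ~ B a b) v s.
Proof.
  intros HB. induction 1 as [x|x y z Hxy _ IH]; [left; constructor|].
  destruct (classic (B x y)) as [Hb|Hb].
  - right. exists x. split; [eapply HB; eauto|constructor].
  - destruct IH as [IH|[s [Hs IH]]].
    + left. econstructor; eauto.
    + right. exists s. split; [exact Hs|]. econstructor; eauto.
Qed.

Lemma del_edge_incl E u v : inclusion V (del_edge V E u v) E.
Proof. intros x y H. apply H. Qed.

Lemma del_edge_sym E u v : symmetric V E -> symmetric V (del_edge V E u v).
Proof. intros Hs x y [H1 [H2 H3]]. split; auto. split; intros [? ?]; subst; tauto. Qed.

Lemma chain_del_edge E l u v :
  chain V E l -> ~ consecutive l u v -> ~ consecutive l v u -> chain V (del_edge V E u v) l.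
Proof.
  intros Hc H1 H2. apply consecutive_chain. intros a b Hab.
  split; [eapply chain_consecutive; eauto|]. split; intros [-> ->]; auto.
Qed.

Lemma cat_move_edge E c c' : E c c' -> c <> c' -> cat_move V E c c'.
Proof.
  intros Hcc' Hne. exists [c']. repeat split; auto; try discriminate.
  repeat constructor; auto. intros [->|[]]; auto.
Qed.

Lemma cat_move_reach E c c' : cat_move V E c c' -> reach E c c'.
Proof. intros [q [_ [_ [Hc ->]]]]. apply chain_reach_last, Hc. Qed.

Lemma cat_move_neq E c c' : cat_move V E c c' -> c' <> c.
Proof.
  intros [q [Hq [Hn [_ ->]]]] E1. inversion Hn as [|? ? Hc _]. apply Hc.
  rewrite <- E1 at 1. apply in_last_nonempty, Hq.
Qed.

Lemma survives_le m n E c : m <= n -> survives V n E c -> survives V m E c.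
Proof.
  revert m E c; induction n as [|n IH]; intros [|m] E c Hmn Hs; try exact I; [lia|].
  destruct Hs as [Hy Hmv]. split; [exact Hy|]. intros u v Huv.
  destruct (Hmv u v Huv) as [c' [H1 H2]]. exists c'. split; [exact H1|].
  apply IH; [lia|exact H2].
Qed.

Definition two_arms E (c : V) a b :=
  chain V E (c :: a) /\ chain V E (c :: b) /\ NoDup (c :: a ++ b).

Lemma two_arms_comm E c a b : two_arms E c a b -> two_arms E c b a.
Proof.
  intros [Ha [Hb Hn]]. repeat split; auto.
  inversion Hn; subst. constructor.
  - rewrite in_app_iff in *. tauto.
  - eapply Permutation_NoDup; [apply Permutation_app_comm|assumption].
Qed.

Lemma two_arms_of_split E l1 c l2 :
  symmetric V E -> chain V E (l1 ++ c :: l2) -> NoDup (l1 ++ c :: l2) ->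
  two_arms E c (rev l1) l2.
Proof.
  intros Hs Hc Hn. apply chain_app_cons in Hc. destruct Hc as [Hc1 Hc2].
  repeat split; auto.
  - replace (c :: rev l1) with (rev (l1 ++ [c])) by apply rev_app_distr.
    apply chain_rev; auto.
  - apply Permutation_NoDup with (l1 ++ c :: l2); [|exact Hn].
    symmetry. etransitivity; [apply Permutation_middle|].
    apply Permutation_app_tail, Permutation_sym, Permutation_rev.
Qed.

Lemma two_arms_edge_disjoint E c a b u v :
  two_arms E c a b ->
  consecutive (c :: a) u v \/ consecutive (c :: a) v u ->
  ~ (consecutive (c :: b) u v \/ consecutive (c :: b) v u).
Proof.
  intros [_ [_ Hn]] Ha Hb.
  assert (Hcommon : forall x, In x (c :: a) -> In x (c :: b) -> x = c).
  { intros x [Hx|Hxa] [Hx'|Hxb]; auto. exfalso.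
    apply NoDup_cons_iff in Hn. destruct Hn as [_ Hn].
    apply in_split in Hxa. destruct Hxa as [l1 [l2 ->]].
    rewrite <- app_assoc in Hn. apply NoDup_remove_2 in Hn.
    apply Hn, in_or_app. right. apply in_or_app. now right. }
  assert (Hc : NoDup (c :: a)).
  { change (c :: a ++ b) with ((c :: a) ++ b) in Hn. exact (NoDup_app_remove_r _ _ Hn). }
  destruct Ha as [Ha|Ha], Hb as [Hb|Hb];
    destruct (consecutive_In _ _ _ Ha), (consecutive_In _ _ _ Hb);
    apply (consecutive_NoDup_neq _ _ _ Hc Ha); rewrite !Hcommon; auto.
Qed.

Lemma two_arms_del_edge E c a b u v :
  two_arms E c a b ->
  chain V (del_edge V E u v) (c :: a) \/ chain V (del_edge V E u v) (c :: b).
Proof.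
  intros Harms. pose proof Harms as [Ha [Hb _]].
  destruct (classic (consecutive (c :: a) u v \/ consecutive (c :: a) v u)) as [Hl|Hl].
  - right. pose proof (two_arms_edge_disjoint _ _ _ _ _ _ Harms Hl) as Hr.
    apply chain_del_edge; auto.
  - left. apply chain_del_edge; auto.
Qed.

Lemma walk_along_arm E c b p :
  symmetric V E -> chain V E (c :: b) -> NoDup (c :: b) -> 1 <= p -> 2 * p <= S (length b) ->
  exists c', cat_move V E c c' /\
    exists a' b', two_arms E c' a' b' /\ p <= S (length a') /\ p <= S (length b').
Proof.
  intros Hs Hc Hn Hp Hlen.
  destruct (nth_split b c (n := p - 1) ltac:(lia)) as [m1 [m2 [Eb Hm1]]].
  set (c' := nth (p - 1) b c) in Eb.
  rewrite Eb in Hc, Hn, Hlen. rewrite length_app in Hlen. simpl in Hlen.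
  change (c :: m1 ++ c' :: m2) with ((c :: m1) ++ c' :: m2) in Hc, Hn.
  exists c'. split.
  - exists (m1 ++ [c']). split; [destruct m1; discriminate|]. split; [|split].
    + apply (NoDup_app_remove_r _ m2). simpl. now rewrite <- app_assoc.
    + exact (proj1 (proj1 (chain_app_cons _ _ _ _) Hc)).
    + symmetry. apply last_last.
  - exists (rev (c :: m1)), m2. split; [apply two_arms_of_split; assumption|].
    rewrite length_rev. simpl. lia.
Qed.

Lemma two_arms_survive n : forall E c a b,
  symmetric V E -> two_arms E c a b -> 2 ^ n <= S (length a) -> 2 ^ n <= S (length b) ->
  survives V n E c.
Proof.
  induction n as [|n IH]; intros E c a b Hs Harms Ha Hb; [exact I|].
  rewrite Nat.pow_succ_r' in Ha, Hb. pose proof (Nat.pow_nonzero 2 n ltac:(lia)).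
  split.
  - destruct b as [|y b]; [simpl in Hb; lia|]. exists y. apply Harms.
  - intros u v _. set (E' := del_edge V E u v).
    assert (Hwalk : forall x y, two_arms E c x y -> 2 * 2 ^ n <= S (length x) ->
                     chain V E' (c :: x) -> exists c', cat_move V E' c c' /\ survives V n E' c').
    { intros x y [_ [_ Hn]] Hx Hc.
      assert (Hnx : NoDup (c :: x)).
      { change (c :: x ++ y) with ((c :: x) ++ y) in Hn. exact (NoDup_app_remove_r _ _ Hn). }
      destruct (walk_along_arm E' c x (2 ^ n)) as [c' [Hmove [a' [b' [Harms' [Ha' Hb']]]]]];
        try apply del_edge_sym; auto; try lia.
      exists c'. split; [exact Hmove|]. apply (IH E' c' a' b'); auto. apply del_edge_sym, Hs. }
    destruct (two_arms_del_edge E c a b u v Harms) as [Hc|Hc].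
    + apply (Hwalk a b); auto.
    + apply (Hwalk b a); auto. apply two_arms_comm, Harms.
Qed.

Lemma paths_omega_evadible G :
  symmetric V G -> (forall k, has_path_on V G k) -> omega_evadible V G.
Proof.
  intros Hs Hpaths k. set (p := 2 ^ (k - 1)). pose proof (Nat.pow_nonzero 2 (k - 1) ltac:(lia)).
  destruct (Hpaths (2 * p)) as [[|x l] [Hl [Hn Hc]]]; [simpl in Hl; lia|].
  destruct (nth_split (x :: l) x (n := p - 1) ltac:(lia)) as [l1 [l2 [El Hl1]]].
  rewrite El in Hl, Hn, Hc. rewrite length_app in Hl. simpl in Hl.
  exists (nth (p - 1) (x :: l) x). apply (two_arms_survive _ _ _ (rev l1) l2 Hs).
  - apply two_arms_of_split; assumption.
  - rewrite length_rev. lia.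
  - lia.
Qed.

Lemma is_cycle_del_edge E p a b :
  is_cycle V E p -> ~ cycle_has_edge V p a b -> is_cycle V (del_edge V E a b) p.
Proof.
  intros [x [q [-> [Hl [Hn [Hc Hcl]]]]]] Hne. exists x, q.
  repeat split; auto.
  - apply consecutive_chain. intros u v Huv. split; [eapply chain_consecutive; eauto|].
    split; intros [-> ->]; apply Hne; [left|right]; left; exact Huv.
  - intros [<- <-]. apply Hne. left. right. now exists x, q.
  - intros [<- <-]. apply Hne. right. right. now exists x, q.
Qed.

Lemma is_cycle_incl E F p : inclusion V E F -> is_cycle V E p -> is_cycle V F p.
Proof.
  intros HEF [x [q [-> [Hl [Hn [Hc Hcl]]]]]]. exists x, q.
  repeat split; auto. eapply chain_incl; eauto.
Qed.

Lemma on_cycles_incl E F v k :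
  inclusion V E F -> on_k_edge_disjoint_cycles V E v k -> on_k_edge_disjoint_cycles V F v k.
Proof.
  intros HEF [C [H1 H2]]. exists C. split; auto.
  intros i Hi. destruct (H1 i Hi). split; auto. eapply is_cycle_incl; eauto.
Qed.

Lemma on_cycles_del_edge E v k a b :
  on_k_edge_disjoint_cycles V E v (S k) -> on_k_edge_disjoint_cycles V (del_edge V E a b) v k.
Proof.
  intros [C [Hc Hd]].
  destruct (classic (exists i0, i0 < S k /\ cycle_has_edge V (C i0) a b)) as [[i0 [Hi0 Hh]]|Hno].
  - (* only the cycle [C i0] can contain the deleted edge; skip it *)
    set (f := fun i => if i <? i0 then i else S i).
    assert (Hf1 : forall i, i < k -> f i < S k)
      by (intros i Hi; unfold f; destruct (Nat.ltb_spec i i0); lia).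
    assert (Hf2 : forall i, f i <> i0) by (intros i; unfold f; destruct (Nat.ltb_spec i i0); lia).
    assert (Hf3 : forall i i', i < i' -> f i < f i')
      by (intros i i' Hi; unfold f; destruct (Nat.ltb_spec i i0), (Nat.ltb_spec i' i0); lia).
    exists (fun i => C (f i)). split.
    + intros i Hi. destruct (Hc (f i) (Hf1 i Hi)) as [H1 H2]. split; [|exact H2].
      apply is_cycle_del_edge; [exact H1|]. intros Hh2.
      destruct (Nat.lt_ge_cases i0 (f i)) as [L|L].
      * exact (Hd i0 (f i) L (Hf1 i Hi) a b Hh Hh2).
      * refine (Hd (f i) i0 _ Hi0 a b Hh2 Hh). specialize (Hf2 i). lia.
    + intros i i' Hi Hi'. apply Hd; auto.
  - exists C. split.
    + intros i Hi. destruct (Hc i ltac:(lia)) as [H1 H2]. split; [|exact H2].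
      apply is_cycle_del_edge; [exact H1|]. intros Hh. apply Hno. exists i. split; [lia|exact Hh].
    + intros i i' Hi Hi'. apply Hd; lia.
Qed.

Lemma is_cycle_rotate E p v :
  is_cycle V E p -> In v p -> exists w rest, is_cycle V E (v :: w :: rest).
Proof.
  intros [x [q [-> [Hl [Hn [Hc Hcl]]]]]] Hv. apply in_split in Hv. destruct Hv as [l1 [l2 E1]].
  assert (Hcyc : is_cycle V E (v :: l2 ++ l1)).
  { destruct l1 as [|y l1]; injection E1; clear E1.
    - intros -> ->. rewrite app_nil_r. now exists v, l2.
    - intros E2 <-. rewrite E2 in Hc, Hn, Hcl, Hl.
      change (x :: l1 ++ v :: l2) with ((x :: l1) ++ v :: l2) in Hc, Hn, Hl.
      apply chain_app_cons in Hc. destruct Hc as [Hc1 Hc2].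
      rewrite last_app_cons in Hcl.
      exists v, (l2 ++ x :: l1). repeat split.
      + simpl in *. rewrite !length_app in *. simpl in *. lia.
      + apply Permutation_NoDup with ((x :: l1) ++ v :: l2); [|exact Hn].
        rewrite <- (Permutation_middle (x :: l1) l2 v). apply perm_skip, Permutation_app_comm.
      + rewrite app_comm_cons. apply chain_app_cons. split.
        * apply chain_snoc; auto.
        * exact (chain_app_l _ _ [v] Hc1).
      + rewrite last_app_cons. exact (chain_snoc_inv _ _ _ _ Hc1). }
  destruct (l2 ++ l1) as [|w rest].
  - destruct Hcyc as [? [? [E4 [Hl' _]]]]. subst. simpl in Hl'. lia.
  - now exists w, rest.
Qed.

Lemma cycle_first_edge E v w rest : is_cycle V E (v :: w :: rest) -> E v w /\ v <> w.
Proof.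
  intros [x [q [E1 [_ [Hn [Hc _]]]]]]. injection E1 as <- <-. split; [apply Hc|].
  intros ->. inversion Hn as [|? ? Hw _]. apply Hw. now left.
Qed.

Lemma on_cycles_first_edge E v k :
  on_k_edge_disjoint_cycles V E v (S k) -> exists w, E v w /\ v <> w /\
    exists rest, is_cycle V E (v :: w :: rest).
Proof.
  intros [C [Hc _]]. destruct (Hc 0 ltac:(lia)) as [H1 H2].
  destruct (is_cycle_rotate _ _ _ H1 H2) as [w [rest Hcyc]].
  exists w. destruct (cycle_first_edge _ _ _ _ Hcyc). eauto.
Qed.

Lemma cycle_return E v w rest a b :
  symmetric V E -> is_cycle V E (v :: w :: rest) -> cat_move V (del_edge V E a b) w v.
Proof.
  intros Hs Hcyc. pose proof (cycle_first_edge _ _ _ _ Hcyc) as [Hvw Hne].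
  destruct Hcyc as [x [q [E1 [Hl [Hn [Hc Hcl]]]]]]. injection E1 as <- <-.
  destruct (classic ((a = w /\ b = v) \/ (a = v /\ b = w))) as [Hab|Hab].
  - (* the edge [vw] is gone: walk around the rest of the cycle *)
    assert (Hn2 : NoDup (w :: rest ++ [v])).
    { apply Permutation_NoDup with (v :: w :: rest); [|exact Hn].
      change (w :: rest ++ [v]) with ((w :: rest) ++ [v]). apply Permutation_cons_append. }
    assert (Hv : ~ In v rest) by (inversion Hn as [|? ? Hv _]; auto with datatypes).
    assert (Hr : rest <> []) by (intros ->; simpl in Hl; lia).
    assert (Hwv : ~ consecutive (w :: rest ++ [v]) w v).
    { intros [[|z l1] [l2 E2]]; injection E2; clear E2.
      - destruct rest as [|r rest]; [congruence|]. intros E3. injection E3 as <- _.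
        apply Hv. now left.
      - intros E3 ->. inversion Hn2 as [|? ? Hw _]. apply Hw. rewrite E3.
        apply in_or_app. right. now left. }
    exists (rest ++ [v]). split; [destruct rest; discriminate|]. split; [exact Hn2|split].
    + apply chain_del_edge.
      * apply chain_snoc; [exact (proj2 Hc)|]. rewrite <- (last_cons_default w v). exact Hcl.
      * destruct Hab as [[-> ->]|[-> ->]]; auto using not_consecutive_to_head.
      * destruct Hab as [[-> ->]|[-> ->]]; auto using not_consecutive_to_head.
    + symmetry. apply last_last.
  - apply cat_move_edge; [|auto]. split; [apply Hs, Hvw|].
    split; intros [-> ->]; apply Hab; auto.
Qed.

Lemma cycles_survive n : forall E v,
  symmetric V E -> on_k_edge_disjoint_cycles V E v (S n) -> survives V n E v.
Proof.
  induction n as [n IH] using lt_wf_ind. intros E v Hs Hk.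
  destruct n as [|n]; [exact I|].
  destruct (on_cycles_first_edge _ _ _ Hk) as [w [Hvw _]].
  split; [now exists w|]. intros a b _.
  pose proof (on_cycles_del_edge _ _ _ a b Hk) as Hk'.
  pose proof (del_edge_sym E a b Hs) as Hs'.
  destruct (on_cycles_first_edge _ _ _ Hk') as [w' [Hvw' [Hne [rest Hcyc]]]].
  exists w'. split; [now apply cat_move_edge|].
  destruct n as [|n]; [exact I|]. split; [exists v; apply Hs', Hvw'|].
  intros a' b' _. exists v. split.
  - eapply cycle_return; eauto.
  - apply IH; [lia|apply del_edge_sym, Hs'|]. apply on_cycles_del_edge, Hk'.
Qed.

Lemma cycles_omega_evadible G :
  symmetric V G -> (forall k, exists v, on_k_edge_disjoint_cycles V G v k) -> omega_evadible V G.
Proof.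
  intros Hs Hk k. destruct (Hk (S (k - 1))) as [v Hv]. exists v. apply cycles_survive; auto.
Qed.

Definition spoke_or_edge (d : V) H (T : V -> Prop) u v :=
  (u = d /\ T v) \/ (v = d /\ T u) \/ H u v.

Definition avoids_vertex H (d : V) := forall a b, H a b -> a <> d /\ b <> d.

Lemma spoke_or_edge_mono d H1 H2 (T1 T2 : V -> Prop) u v :
  inclusion V H1 H2 -> (forall t, T1 t -> T2 t) ->
  spoke_or_edge d H1 T1 u v -> spoke_or_edge d H2 T2 u v.
Proof. intros HH HT [[? ?]|[[? ?]|?]]; [left|right; left|right; right]; auto. Qed.

Lemma spoke_or_edge_disjoint d H1 H2 (T1 T2 : V -> Prop) p1 p2 :
  (forall a b, H1 a b -> H2 a b -> False) -> (forall t, T1 t -> T2 t -> False) ->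
  avoids_vertex H1 d -> avoids_vertex H2 d ->
  (forall t, T1 t -> t <> d) -> (forall t, T2 t -> t <> d) ->
  (forall u v, cycle_has_edge V p1 u v -> spoke_or_edge d H1 T1 u v) ->
  (forall u v, cycle_has_edge V p2 u v -> spoke_or_edge d H2 T2 u v) ->
  edge_disjoint V p1 p2.
Proof.
  intros HH HT A1 A2 N1 N2 G1 G2 u v E1 E2.
  specialize (G1 u v E1). specialize (G2 u v E2).
  destruct G1 as [[-> S1]|[[-> S1]|S1]], G2 as [[E3 S2]|[[E3 S2]|S2]]; subst; try solve [eauto];
    try solve [apply A1 in S1; tauto]; try solve [apply A2 in S2; tauto];
    try solve [apply N1 in S1; tauto]; try solve [apply N2 in S2; tauto].
Qed.

Lemma cyc_edge_cons (x u v : V) l :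
  cyc_edge V (x :: l) u v ->
  (u = x /\ exists l', l = v :: l') \/ consecutive l u v \/ (u = last l x /\ v = x).
Proof.
  intros [[[|z l1] [l2 E1]]|[x' [q [E1 [E2 E3]]]]]; simpl in E1; injection E1; intros; subst.
  - left. eauto.
  - right; left. now exists l1, l2.
  - now right; right.
Qed.

Lemma cycle_through_hub E H d t q :
  symmetric V E -> (forall x, ~ E x x) -> symmetric V H -> inclusion V H E -> avoids_vertex H d ->
  q <> [] -> NoDup (t :: q) -> chain V H (t :: q) -> E d t -> E d (last q t) ->
  is_cycle V E (d :: t :: q) /\
  forall u v, cycle_has_edge V (d :: t :: q) u v ->
    spoke_or_edge d (fun a b => H a b /\ (consecutive (t :: q) a b \/ consecutive (t :: q) b a))
                  (fun s => s = t \/ s = last q t) u v.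
Proof.
  intros HsE Hirr HsH HHE Hav Hq Hn Hc Hd1 Hd2.
  assert (Hnd : ~ In d (t :: q)).
  { intros [Hx|Hx]; [subst; eapply Hirr; eauto|].
    destruct (chain_incoming_edge _ _ _ _ Hc Hx) as [z Hz]. apply Hav in Hz. tauto. }
  split.
  - exists d, (t :: q). repeat split.
    + destruct q; [congruence|]. simpl; lia.
    + constructor; auto.
    + exact Hd1.
    + eapply chain_incl; eauto.
    + rewrite last_cons_default. apply HsE, Hd2.
  - intros u v [Hx|Hx]; apply cyc_edge_cons in Hx; rewrite ?last_cons_default in Hx.
    + destruct Hx as [[-> [l' El]]|[Hx|[-> ->]]].
      * injection El as <- _. left. auto.
      * right; right. split; [eapply chain_consecutive; eauto|auto].
      * right; left. auto.
    + destruct Hx as [[-> [l' El]]|[Hx|[-> ->]]].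
      * injection El as <- _. right; left. auto.
      * right; right. split; [apply HsH; eapply chain_consecutive; eauto|auto].
      * left. auto.
Qed.

Lemma split_list_by (Pr : V -> Prop) L :
  NoDup L -> exists L1 L2, NoDup L1 /\ NoDup L2 /\ incl L1 L /\ incl L2 L /\
    length L1 + length L2 = length L /\ (forall t, In t L1 -> Pr t) /\ (forall t, In t L2 -> ~ Pr t).
Proof.
  induction L as [|x L IH]; intros Hn.
  - exists [], []. repeat split; simpl; auto using incl_refl; intros ? [].
  - inversion Hn as [|? ? Hx Hn']; subst.
    destruct (IH Hn') as [L1 [L2 [N1 [N2 [I1 [I2 [Hl [P1 P2]]]]]]]].
    destruct (classic (Pr x)) as [Hp|Hp].
    + exists (x :: L1), L2. repeat split; simpl; auto using incl_tl, incl_cons with datatypes; try lia.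
      * constructor; auto.
      * intros t [<-|Ht]; auto.
    + exists L1, (x :: L2). repeat split; simpl; auto using incl_tl, incl_cons with datatypes; try lia.
      * constructor; auto.
      * intros t [<-|Ht]; auto.
Qed.

Lemma pigeonhole_list (R : V -> V -> Prop) m : forall A L,
  NoDup L -> (forall t, In t L -> exists a, In a A /\ R t a) ->
  length A * m <= length L -> 0 < length L ->
  exists a L', NoDup L' /\ incl L' L /\ m <= length L' /\ (forall t, In t L' -> R t a).
Proof.
  induction A as [|a A IH]; intros L Hn HL Hl Hp.
  - destruct L as [|t L]; [simpl in Hp; lia|].
    destruct (HL t (or_introl eq_refl)) as [a [[] _]].
  - destruct (split_list_by (fun t => R t a) L Hn) as [L1 [L2 [N1 [N2 [I1 [I2 [Hl2 [P1 P2]]]]]]]].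
    destruct (le_lt_dec m (length L1)) as [Hm|Hm]; [exists a, L1; auto|].
    destruct (IH L2 N2) as [b [L' [H1 [H2 [H3 H4]]]]]; simpl in Hl; try lia.
    + intros t Ht. destruct (HL t (I2 t Ht)) as [b [[<-|Hb] Hr]]; [exfalso; eapply P2; eauto|eauto].
    + exists b, L'. repeat split; auto. eapply incl_tran; eauto.
Qed.

Lemma big_class_or_transversal (Rel : V -> V -> Prop) (z0 : V) m :
  symmetric V Rel -> reflexive V Rel -> forall j L, NoDup L -> j * m <= length L ->
  (exists z L', NoDup L' /\ incl L' L /\ m <= length L' /\ forall t, In t L' -> Rel t z) \/
  (exists U, NoDup U /\ incl U L /\ length U = j /\
     forall a b, In a U -> In b U -> a <> b -> ~ Rel a b).
Proof.
  intros HsR Hrefl. induction j as [|j IH]; intros L Hn Hl.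
  { right. exists []. repeat split; [constructor|intros ? []|intros ? ? []]. }
  destruct L as [|u L0].
  { left. exists z0, []. repeat split; [constructor|intros ? []|simpl in *; lia|intros ? []]. }
  inversion Hn as [|? ? Hu Hn0]; subst.
  destruct (split_list_by (Rel u) L0 Hn0) as [L1 [L2 [N1 [N2 [I1 [I2 [Hl2 [P1 P2]]]]]]]].
  destruct (le_lt_dec m (S (length L1))) as [Hm|Hm].
  - left. exists u, (u :: L1). repeat split; simpl; auto using incl_cons, incl_tl with datatypes.
    + constructor; auto.
    + intros t [<-|Ht]; auto.
  - destruct (IH L2 N2) as [[z [L' [A1 [A2 [A3 A4]]]]]|[U [B1 [B2 [B3 B4]]]]];
      [simpl in Hl; lia| |].
    + left. exists z, L'. repeat split; auto. eapply incl_tran; eauto using incl_tl.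
    + right. exists (u :: U). repeat split; simpl.
      * constructor; auto.
      * apply incl_cons; [now left|]. apply incl_tl. eapply incl_tran; eauto.
      * lia.
      * intros a b [<-|Ha] [<-|Hb] Hab; [congruence| | |apply B4; auto]; intros Hr.
        -- eapply P2; eauto.
        -- eapply P2; eauto.
Qed.

Definition hub_cycles E (d : V) H (T : V -> Prop) j :=
  exists C : nat -> list V,
    (forall i, i < j -> is_cycle V E (C i) /\ In d (C i) /\
       forall u v, cycle_has_edge V (C i) u v -> spoke_or_edge d H T u v) /\
    (forall i i', i < i' -> i' < j -> edge_disjoint V (C i) (C i')).

Lemma hub_cycles_on_cycles E d H T j : hub_cycles E d H T j -> on_k_edge_disjoint_cycles V E d j.
Proof.
  intros [C [HC1 HC2]]. exists C. split; [|exact HC2].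
  intros i Hi. destruct (HC1 i Hi) as [X1 [X2 _]]. auto.
Qed.

Lemma hub_cycles_cons E d H0 T0 H1 T1 H T p j :
  avoids_vertex H0 d -> avoids_vertex H1 d -> (forall t, T0 t -> t <> d) -> (forall t, T1 t -> t <> d) ->
  (forall a b, H0 a b -> H1 a b -> False) -> (forall t, T0 t -> T1 t -> False) ->
  inclusion V H0 H -> inclusion V H1 H -> (forall t, T0 t -> T t) -> (forall t, T1 t -> T t) ->
  is_cycle V E p -> In d p -> (forall u v, cycle_has_edge V p u v -> spoke_or_edge d H0 T0 u v) ->
  hub_cycles E d H1 T1 j -> hub_cycles E d H T (S j).
Proof.
  intros A0 A1 N0 N1 HH HT I0 I1 J0 J1 Hp Hdp Hgp [C [HC1 HC2]].
  exists (fun i => match i with 0 => p | S i => C i end). split.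
  - intros [|i] Hi; [split; [exact Hp|split; [exact Hdp|]]|].
    + intros u v Huv. eapply spoke_or_edge_mono; [exact I0|exact J0|auto].
    + destruct (HC1 i ltac:(lia)) as [X1 [X2 X3]]. repeat split; auto.
      intros u v Huv. eapply spoke_or_edge_mono; [exact I1|exact J1|auto].
  - intros [|i] [|i'] Hii Hi'; try lia; [|apply HC2; lia].
    destruct (HC1 i' ltac:(lia)) as [_ [_ X3]].
    apply (spoke_or_edge_disjoint d H0 H1 T0 T1); auto.
Qed.

(* Two neighbours close a cycle; the others fall into at most [P + 1] classes. *)
Fixpoint hub_threshold (P j : nat) : nat :=
  match j with 0 => 0 | S j => 2 + (P + 1) * hub_threshold P j end.

Definition del_path_edges H pi := fun a b => H a b /\ ~ (consecutive pi a b \/ consecutive pi b a).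

Lemma del_path_edges_sym H pi : symmetric V H -> symmetric V (del_path_edges H pi).
Proof. intros Hs x y [Hxy HB]. split; [apply Hs, Hxy|]. intros [Hb|Hb]; apply HB; auto. Qed.

(* Once the edges of [pi] are deleted, each vertex once connected to [z] is still
   connected to [z] or to a vertex of [pi]. *)
Lemma concentrate_off_path H pi z m L :
  NoDup L -> (forall t, In t L -> reach H t z) -> (S (length pi)) * m <= length L ->
  exists a L', NoDup L' /\ incl L' L /\ m <= length L' /\
               forall t, In t L' -> reach (del_path_edges H pi) t a.
Proof.
  intros Hn HL Hl. destruct (Nat.eq_dec m 0) as [->|Hm].
  { exists z, []. repeat split; [constructor|intros ? []|lia|intros ? []]. }
  apply (pigeonhole_list _ m (z :: pi)); [exact Hn| |exact Hl|nia].
  intros t Ht. destruct (reach_until_blocked H (fun a b => consecutive pi a b \/ consecutive pi b a)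
                          pi t z) as [Hr|[s [Hs Hr]]]; [| |exists z; split; [now left|exact Hr]|].
  - intros a b [Hab|Hab]; apply (consecutive_In _ _ _ Hab).
  - apply HL, Ht.
  - exists s. split; [now right|exact Hr].
Qed.

(* Join two neighbours [t1], [t2] of [d] by a path [pi] in [H], closing a cycle through
   [d]; after deleting the edges of [pi], pigeonhole leaves [hub_threshold P j] of the
   other neighbours in one class, where we recurse. *)
Lemma cycles_from_one_component E P d :
  symmetric V E -> (forall x, ~ E x x) -> (forall l, NoDup l -> chain V E l -> length l < P) ->
  forall j H T z, symmetric V H -> inclusion V H E -> avoids_vertex H d -> NoDup T ->
  (forall t, In t T -> E d t) -> (forall t, In t T -> reach H t z) ->
  hub_threshold P j <= length T -> hub_cycles E d H (fun t => In t T) j.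
Proof.
  intros HsE Hirr HP. induction j as [|j IH]; intros H T z HsH HHE Hav Hn HTd HTz Hl.
  { exists (fun _ => []). split; intros; lia. }
  simpl in Hl. destruct T as [|t1 [|t2 rest]]; simpl in Hl; try lia.
  inversion Hn as [|? ? Hn1 Hn']; inversion Hn' as [|? ? Hn2 Hnr]; subst.
  assert (Hd : forall t, E d t -> t <> d) by (intros t Ht ->; exact (Hirr d Ht)).
  assert (Hr12 : reach H t1 t2).
  { apply reach_trans with z; [apply HTz; now left|].
    apply reach_sym; [exact HsH|]. apply HTz; right; now left. }
  destruct (reach_path _ _ _ Hr12) as [q [Hnq [Hcq Hlq]]].
  assert (Hq : q <> []) by (intros ->; simpl in Hlq; subst; apply Hn1; now left).
  set (pi := t1 :: q) in *.
  destruct (cycle_through_hub E H d t1 q HsE Hirr HsH HHE Hav Hq Hnq Hcq) as [Hcyc Hspokes].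
  { apply HTd; now left. }
  { rewrite Hlq. apply HTd; right; now left. }
  assert (Hpi : length pi < P) by (apply HP; [exact Hnq|eapply chain_incl; eauto]).
  destruct (concentrate_off_path H pi z (hub_threshold P j) rest) as [a [T' [N' [I' [L' R']]]]];
    [exact Hnr|intros t Ht; apply HTz; auto with datatypes|nia|].
  apply (hub_cycles_cons E d (fun a b => H a b /\ (consecutive pi a b \/ consecutive pi b a))
           (fun s => s = t1 \/ s = last q t1) (del_path_edges H pi) (fun t => In t T')
           H _ (d :: pi) j);
    auto with datatypes.
  - intros u v [Huv _]. apply Hav, Huv.
  - intros u v [Huv _]. apply Hav, Huv.
  - intros t [-> | ->]; apply Hd, HTd; [now left|rewrite Hlq; right; now left].
  - intros t Ht. apply Hd, HTd. auto with datatypes.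
  - intros u v [_ Hb] [_ Hb']. exact (Hb' Hb).
  - intros t [-> | ->] Ht; [apply Hn1|rewrite Hlq in Ht; apply Hn2]; auto with datatypes.
  - intros u v []; assumption.
  - intros u v []; assumption.
  - intros t [-> | ->]; [now left|rewrite Hlq; right; now left].
  - apply (IH _ T' a); auto using del_path_edges_sym with datatypes.
    + intros u v [Huv _]. apply HHE, Huv.
    + intros u v [Huv _]. apply Hav, Huv.
Qed.

Definition cyclic_neighbour E (d u : V) :=
  E d u /\ exists w, w <> u /\ E d w /\ reach (del_vertex E d) u w.

Definition component E (d u : V) := fun t => reach (del_vertex E d) t u.

Definition component_edges E (d u : V) := fun a b => del_vertex E d a b /\ component E d u a.

Lemma component_edges_sym E d u : symmetric V E -> symmetric V (component_edges E d u).
Proof.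
  intros Hs a b [Hab Hau]. split; [apply del_vertex_sym; auto|].
  apply reach_trans with a; [apply reach_edge, del_vertex_sym, Hab; exact Hs|exact Hau].
Qed.

Lemma reach_within_component R u x y :
  symmetric V R -> reach R x y -> reach R x u -> reach (fun a b => R a b /\ reach R a u) x y.
Proof.
  intros Hs. induction 1 as [x|x y z Hxy _ IH]; intros Hxu; [constructor|].
  econstructor; [split; eauto|]. apply IH.
  apply reach_trans with x; [apply reach_edge, Hs, Hxy|exact Hxu].
Qed.

Lemma cycle_in_component E d u :
  symmetric V E -> (forall x, ~ E x x) -> cyclic_neighbour E d u ->
  exists p, is_cycle V E p /\ In d p /\
    forall x y, cycle_has_edge V p x y -> spoke_or_edge d (component_edges E d u) (component E d u) x y.
Proof.
  intros HsE Hirr [Hdu [w [Hwu [Hdw Hr]]]].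
  assert (Hr' : reach (component_edges E d u) u w)
    by (apply reach_within_component; [apply del_vertex_sym, HsE|exact Hr|constructor]).
  destruct (reach_path _ _ _ Hr') as [q [Hnq [Hcq Hlq]]].
  assert (Hq : q <> []) by (intros ->; simpl in Hlq; congruence).
  destruct (cycle_through_hub E (component_edges E d u) d u q HsE Hirr) as [Hcyc Hspokes];
    auto using component_edges_sym.
  - intros a b [[Hab _] _]; exact Hab.
  - intros a b [[_ Hab] _]; exact Hab.
  - now rewrite Hlq.
  - exists (d :: u :: q). split; [exact Hcyc|split; [now left|]].
    intros x y Hxy. eapply spoke_or_edge_mono; [| |apply Hspokes, Hxy].
    + intros a b [Hab _]; exact Hab.
    + intros t [-> | ->]; [constructor|]. rewrite Hlq.
      apply reach_sym; [apply del_vertex_sym, HsE|exact Hr].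
Qed.

Lemma finite_choice (Pr : nat -> list V -> Prop) n :
  (forall i, i < n -> exists p, Pr i p) -> exists C : nat -> list V, forall i, i < n -> Pr i (C i).
Proof.
  induction n as [|n IH]; intros Hex; [exists (fun _ => []); intros; lia|].
  destruct IH as [C HC]; [intros i Hi; apply Hex; lia|].
  destruct (Hex n ltac:(lia)) as [p Hp].
  exists (fun i => if i =? n then p else C i). intros i Hi.
  destruct (Nat.eqb_spec i n) as [->|Hne]; [exact Hp|]. apply HC. lia.
Qed.

Lemma component_neq_hub E d u t : (forall x, ~ E x x) -> E d u -> component E d u t -> t <> d.
Proof. intros Hirr Hdu Ht ->. apply reach_del_vertex_from in Ht. subst. exact (Hirr d Hdu). Qed.

Lemma components_edge_disjoint E d u u' p p' :
  symmetric V E -> (forall x, ~ E x x) -> E d u -> E d u' -> ~ reach (del_vertex E d) u u' ->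
  (forall x y, cycle_has_edge V p x y -> spoke_or_edge d (component_edges E d u) (component E d u) x y) ->
  (forall x y, cycle_has_edge V p' x y -> spoke_or_edge d (component_edges E d u') (component E d u') x y) ->
  edge_disjoint V p p'.
Proof.
  intros HsE Hirr Hdu Hdu' Hnr. pose proof (del_vertex_sym E d HsE) as Hs.
  apply spoke_or_edge_disjoint.
  - intros a b [_ R1] [_ R2]. apply Hnr. apply reach_trans with a; [apply reach_sym|]; assumption.
  - intros t R1 R2. apply Hnr. apply reach_trans with t; [apply reach_sym|]; assumption.
  - intros a b [[_ X] _]; exact X.
  - intros a b [[_ X] _]; exact X.
  - intros t. apply component_neq_hub; assumption.
  - intros t. apply component_neq_hub; assumption.
Qed.

Lemma cyclic_degree_lt E P Q d :
  symmetric V E -> (forall x, ~ E x x) -> (forall l, NoDup l -> chain V E l -> length l < P) ->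
  ~ on_k_edge_disjoint_cycles V E d Q ->
  forall L, NoDup L -> (forall u, In u L -> cyclic_neighbour E d u) ->
  length L < Q * hub_threshold P Q.
Proof.
  intros HsE Hirr HP HnQ L Hn HL. apply Nat.nle_gt. intros Hle. apply HnQ.
  pose proof (del_vertex_sym E d HsE) as HsA.
  destruct (big_class_or_transversal (reach (del_vertex E d)) d (hub_threshold P Q)
              (fun x y => reach_sym _ x y HsA) (@rt1n_refl _ _) Q L Hn)
    as [[z [L' [A1 [A2 [A3 A4]]]]]|[U [B1 [B2 [B3 B4]]]]]; [lia| |].
  - apply (hub_cycles_on_cycles _ _ (del_vertex E d) (fun t => In t L')).
    apply (cycles_from_one_component E P d HsE Hirr HP Q _ L' z HsA); auto.
    + intros a b Hab; apply Hab.
    + intros a b [_ Hab]; exact Hab.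
    + intros t Ht. apply HL, A2, Ht.
  - destruct (finite_choice (fun i p => is_cycle V E p /\ In d p /\ forall x y,
                 cycle_has_edge V p x y ->
                 spoke_or_edge d (component_edges E d (nth i U d)) (component E d (nth i U d)) x y)
                (length U)) as [C HC].
    { intros i Hi. apply cycle_in_component; auto. apply HL, B2, nth_In, Hi. }
    exists C. rewrite <- B3. split.
    + intros i Hi. destruct (HC i Hi) as [X1 [X2 _]]. auto.
    + intros i i' Hii Hi'. destruct (HC i ltac:(lia)) as [_ [_ G1]], (HC i' Hi') as [_ [_ G2]].
      assert (I1 : In (nth i U d) U) by (apply nth_In; lia).
      assert (I2 : In (nth i' U d) U) by (apply nth_In; lia).
      apply (components_edge_disjoint E d (nth i U d) (nth i' U d)); auto.
      * apply HL, B2, I1.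
      * apply HL, B2, I2.
      * apply B4; auto. intros Heq. apply NoDup_nth in Heq; auto; lia.
Qed.

Definition path_bound E (d : V) n :=
  forall q, NoDup (d :: q) -> chain V E (d :: q) -> length (d :: q) < n.

Definition cyclic_degree_le E (d : V) k :=
  forall L, NoDup L -> (forall u, In u L -> cyclic_neighbour E d u) -> length L <= k.

Lemma path_bound_incl E F d n : inclusion V E F -> path_bound F d n -> path_bound E d n.
Proof. intros HEF Hb q H1 H2. apply Hb; auto. eapply chain_incl; eauto. Qed.

Lemma cyclic_neighbour_incl E F d u : inclusion V E F -> cyclic_neighbour E d u -> cyclic_neighbour F d u.
Proof.
  intros HEF [H1 [w [H2 [H3 H4]]]]. split; auto. exists w. repeat split; auto.
  eapply reach_incl; [apply del_vertex_incl, HEF|exact H4].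
Qed.

Lemma reach_del_edge_at E d x a b : reach (del_vertex E d) a b -> reach (del_edge V E d x) a b.
Proof.
  apply reach_incl. intros u v [Huv [Hu Hv]]. split; [exact Huv|].
  split; intros [? ?]; subst; congruence.
Qed.

Lemma entry_unique E d c x x' :
  symmetric V E -> (forall u, ~ cyclic_neighbour E d u) ->
  E x d -> reach (del_vertex E d) c x -> E x' d -> reach (del_vertex E d) c x' -> x' = x.
Proof.
  intros Hs Hnc Hx Hcx Hx' Hcx'. apply NNPP. intros Hne. apply (Hnc x).
  split; [apply Hs, Hx|]. exists x'. split; [exact Hne|]. split; [apply Hs, Hx'|].
  apply reach_trans with c; [apply reach_sym; [apply del_vertex_sym, Hs|exact Hcx]|exact Hcx'].
Qed.

Lemma path_bound_beyond_entry E d c x n :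
  symmetric V E -> (forall y, ~ E y y) -> (forall u, ~ cyclic_neighbour E d u) ->
  path_bound E d (S n) -> E x d -> reach (del_vertex E d) c x ->
  path_bound (del_edge V E d x) x n.
Proof.
  intros Hs Hirr Hnc Hb Hxd Hcx q Hnq Hcq.
  assert (Hxne : x <> d) by (intros ->; exact (Hirr d Hxd)).
  assert (Hnd : ~ In d (x :: q)).
  { intros Hin. assert (Hxd' : reach (del_edge V E d x) x d) by (eapply chain_reach_In; eauto).
    destruct (reach_last_neighbour _ d x Hxd' Hxne) as [x'' [Hx''d Hxx'']].
    assert (x'' = x) as ->.
    { apply (entry_unique E d c x x''); auto; [apply Hx''d|].
      apply reach_trans with x; [exact Hcx|].
      eapply reach_incl; [apply del_vertex_incl, del_edge_incl|exact Hxx'']. }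
    destruct Hx''d as [_ [_ Hdel]]. apply Hdel. now split. }
  assert (length (d :: x :: q) < S n); [|simpl in *; lia].
  apply Hb; [constructor; auto|]. split; [apply Hs, Hxd|].
  eapply chain_incl; [apply del_edge_incl|exact Hcq].
Qed.

Lemma cyclic_degree_del_cyclic E d u k :
  cyclic_degree_le E d (S k) -> cyclic_neighbour E d u -> cyclic_degree_le (del_edge V E d u) d k.
Proof.
  intros Hk Hu L HnL HL. assert (length (u :: L) <= S k); [|simpl in *; lia].
  apply Hk.
  - constructor; [|exact HnL]. intros HuL. destruct (HL u HuL) as [[_ [Hdel _]] _]. now apply Hdel.
  - intros y [<-|Hy]; [exact Hu|]. eapply cyclic_neighbour_incl; [apply del_edge_incl|apply HL, Hy].
Qed.

Lemma reach_hub_del_cyclic E d u c :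
  symmetric V E -> (forall y, ~ E y y) -> cyclic_neighbour E d u -> reach E c d ->
  reach (del_edge V E d u) c d.
Proof.
  intros Hs Hirr [Hdu [w [Hwu [Hdw Hrw]]]] Hcd. pose proof (del_edge_sym E d u Hs) as Hs'.
  assert (Hdne : d <> u) by (intros ->; exact (Hirr u Hdu)).
  (* the deleted edge [du] is bypassed by [d - w ~ u] *)
  assert (Hdu' : reach (del_edge V E d u) d u).
  { apply (Relation_Operators.rt1n_trans _ _ d w u); [split; [exact Hdw|split; intros [? ?]; congruence]|].
    apply reach_sym; [exact Hs'|]. apply reach_del_edge_at, Hrw. }
  eapply reach_of_edges_reach; [|exact Hcd]. intros a b Hab.
  destruct (classic (a = d /\ b = u)) as [[-> ->]|H1]; [exact Hdu'|].
  destruct (classic (a = u /\ b = d)) as [[-> ->]|H2]; [apply reach_sym; assumption|].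
  apply reach_edge. split; auto.
Qed.

Section Herding.
Variables (G : V -> V -> Prop) (P Q : nat).
Hypothesis HirrG : forall x, ~ G x x.
Hypothesis HP : forall l, NoDup l -> chain V G l -> length l < P.
Hypothesis HQ : forall v, ~ on_k_edge_disjoint_cycles V G v Q.

Definition subgraph E := symmetric V E /\ inclusion V E G.

Lemma subgraph_irrefl E x : subgraph E -> ~ E x x.
Proof. intros [_ HEG] Hx. exact (HirrG x (HEG x x Hx)). Qed.

Lemma subgraph_del_edge E u v : subgraph E -> subgraph (del_edge V E u v).
Proof.
  intros [Hs HEG]. split; [apply del_edge_sym, Hs|].
  intros a b Hab. apply HEG, Hab.
Qed.

Lemma subgraph_cyclic_degree E d : subgraph E -> cyclic_degree_le E d (Q * hub_threshold P Q).
Proof.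
  intros [Hs HEG] L Hn HL. apply Nat.lt_le_incl, (cyclic_degree_lt E P Q d); auto.
  - intros x. apply subgraph_irrefl. split; assumption.
  - intros l H1 H2. apply HP; [exact H1|]. eapply chain_incl; eauto.
  - intros Hk. apply (HQ d). eapply on_cycles_incl; eauto.
Qed.

Definition herder_wins n := forall E d c,
  subgraph E -> path_bound E d n -> reach E c d ->
  ~ survives V (n * (Q * hub_threshold P Q + 2)) E c.

Section Step.
Variable n : nat.
Hypothesis IHn : herder_wins n.
Let T := n * (Q * hub_threshold P Q + 2).

Lemma herd_bridge E d c :
  subgraph E -> path_bound E d (S n) -> reach E c d -> c <> d ->
  (forall u, ~ cyclic_neighbour E d u) -> ~ survives V (S T) E c.
Proof.
  intros HE Hb Hr Hne Hnc [_ Hmv].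
  pose proof HE as [Hs _].
  destruct (reach_last_neighbour E d c Hr Hne) as [x [Hxd Hcx]].
  destruct (Hmv d x (Hs _ _ Hxd)) as [c' [Hmove Hsv']].
  apply (IHn (del_edge V E d x) x c'); [apply subgraph_del_edge, HE| | |exact Hsv'].
  - apply (path_bound_beyond_entry E d c); auto. intros y. apply subgraph_irrefl, HE.
  - apply reach_trans with c; [|apply reach_del_edge_at, Hcx].
    apply reach_sym; [apply del_edge_sym, Hs|]. apply cat_move_reach, Hmove.
Qed.

Lemma herd_acyclic E d c :
  subgraph E -> path_bound E d (S n) -> reach E c d ->
  (forall u, ~ cyclic_neighbour E d u) -> ~ survives V (S (S T)) E c.
Proof.
  intros HE Hb Hr Hnc Hsv. pose proof HE as [Hs _].
  destruct (classic (c = d)) as [->|Hne].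
  - destruct Hsv as [[y Hy] Hmv]. destruct (Hmv d y Hy) as [c' [Hmove Hsv']].
    apply (herd_bridge (del_edge V E d y) d c'); [apply subgraph_del_edge, HE| | | | |exact Hsv'].
    + eapply path_bound_incl; [apply del_edge_incl|exact Hb].
    + apply reach_sym; [apply del_edge_sym, Hs|]. apply cat_move_reach, Hmove.
    + exact (cat_move_neq _ _ _ Hmove).
    + intros u Hu. apply (Hnc u). apply (cyclic_neighbour_incl (del_edge V E d y)); [apply del_edge_incl|exact Hu].
  - apply (herd_bridge E d c); auto. eapply survives_le; [|exact Hsv]. lia.
Qed.

Lemma herd_cyclic k : forall E d c,
  subgraph E -> path_bound E d (S n) -> reach E c d -> cyclic_degree_le E d k ->
  ~ survives V (k + 2 + T) E c.
Proof.
  induction k as [|k IHk]; intros E d c HE Hb Hr Hk Hsv; pose proof HE as [Hs _];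
    (destruct (classic (exists u, cyclic_neighbour E d u)) as [[u Hu]|Hnc];
     [|refine (herd_acyclic E d c HE Hb Hr _ _);
       [intros u Hu; apply Hnc; eauto|eapply survives_le; [|exact Hsv]; lia]]).
  - specialize (Hk [u] ltac:(repeat constructor; auto)). simpl in Hk.
    assert (1 <= 0); [apply Hk; intros u' [<-|[]]; exact Hu|lia].
  - destruct Hsv as [_ Hmv]. destruct (Hmv d u (proj1 Hu)) as [c' [Hmove Hsv']].
    apply (IHk (del_edge V E d u) d c'); [apply subgraph_del_edge, HE| | | |exact Hsv'].
    + eapply path_bound_incl; [apply del_edge_incl|exact Hb].
    + apply reach_trans with c.
      * apply reach_sym; [apply del_edge_sym, Hs|]. apply cat_move_reach, Hmove.
      * apply reach_hub_del_cyclic; auto. intros y. apply subgraph_irrefl, HE.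
    + apply cyclic_degree_del_cyclic; assumption.
Qed.

End Step.

Lemma herder_wins_all n : herder_wins n.
Proof.
  induction n as [|n IHn]; intros E d c HE Hb Hr.
  - exfalso. specialize (Hb [] ltac:(repeat constructor; intros [])). simpl in Hb. lia.
  - apply (herd_cyclic n IHn (Q * hub_threshold P Q) E d c HE Hb Hr).
    apply subgraph_cyclic_degree, HE.
Qed.

End Herding.

Lemma path_length_bound G P :
  ~ has_path_on V G P -> forall l, NoDup l -> chain V G l -> length l < P.
Proof.
  intros HnP l Hn Hc. apply Nat.nle_gt. intros Hl. apply HnP. exists (firstn P l).
  rewrite <- (firstn_skipn P l) in Hn, Hc. split; [rewrite length_firstn; lia|].
  split; [exact (NoDup_app_remove_r _ _ Hn)|exact (chain_app_l _ _ _ Hc)].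
Qed.

Lemma not_omega_evadible G P Q :
  symmetric V G -> (forall x, ~ G x x) -> ~ has_path_on V G P ->
  (forall v, ~ on_k_edge_disjoint_cycles V G v Q) -> ~ omega_evadible V G.
Proof.
  intros HsG HirrG HnP HnQ Hom.
  pose proof (path_length_bound G P HnP) as HP.
  destruct (Hom (S (P * (Q * hub_threshold P Q + 2)))) as [c Hc].
  rewrite Nat.sub_1_r in Hc.
  apply (herder_wins_all G P Q HirrG HP HnQ P G c c); [| |constructor|exact Hc].
  - split; [exact HsG|intros x y H; exact H].
  - intros q Hn Hq. apply HP; assumption.
Qed.

End CatHerdingProof.

Theorem mainTheorem19 (V : Type) (adj : V -> V -> Prop) :
  simple_graph V adj ->
  (omega_evadible V adj <->
   ((forall k : nat, has_path_on V adj k) \/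
    (forall k : nat, exists v : V, on_k_edge_disjoint_cycles V adj v k))).
Proof.
  intros [Hs Hirr]. split.
  - intros Hom. apply NNPP. intros Hno. apply not_or_and in Hno. destruct Hno as [HnP HnQ].
    apply not_all_ex_not in HnP as [P HP]. apply not_all_ex_not in HnQ as [Q HQ].
    apply (not_omega_evadible V adj P Q Hs Hirr HP); [|exact Hom].
    intros v Hv. apply HQ. now exists v.
  - intros [Hpaths|Hcycles].
    + apply paths_omega_evadible; assumption.
    + apply cycles_omega_evadible; assumption.
Qed.
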